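(* Let $k',d',n'$ be positive integers with $k'<d'<n'/2$. For each positive integer $m$ set $k=k'm$, $d=d'm$, $n=n'm$, let $f_m=\mathrm{Sym}_{d,n}(x_1,\ldots,x_n)=\sum_{I\in\{0,1\}^n,\,|I|=d}x^I$, let $M_m$ be the matrix with rows indexed by $I\in\{0,1\}^n$ with $|I|=k$, columns indexed by $J\in\{0,1\}^n$ with $|J|=d-k$, and entries $1$ if $I,J$ have disjoint supports and $0$ otherwise, and let $B_m=M_m^TM_m$. Let $u_m=\dim\partial^{=k} f_m$ and $v_m=\mathrm{Tr}(B_m)^2/\mathrm{Tr}(B_m^2)$. Then $v_m/u_m\to 0$ as $m\to\infty$.
   Context: $x^I$ for $I\in\{0,1\}^n$ denotes the multilinear monomial $x_1^{I_1}\cdots x_n^{I_n}$, and $|I|=\sum_i I_i$. $\partial^{=k} f$ denotes the real linear span of all partial derivatives of $f$ of total order $k$. *)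

From HB Require Import structures.
From mathcomp Require Import all_boot all_order all_algebra.
From mathcomp Require Import reals.
From mathcomp Require Import mpoly.
Set Implicit Arguments. Unset Strict Implicit. Unset Printing Implicit Defensive.
Import Order.TTheory GRing.Theory Num.Theory.
Local Open Scope ring_scope.

(* Multilinear monomial x^I for I a subset of {0..n-1} (I <-> indicator in {0,1}^n). *)
Definition xI (R : realType) (n : nat) (I : {set 'I_n}) : {mpoly R[n]} :=
  \prod_(i in I) 'X_i.

Definition Sym (R : realType) (n d : nat) : {mpoly R[n]} :=
  \sum_(I : {set 'I_n} | (#|I| == d)%N) xI R I.

Definition in_partial_span (R : realType) (n k : nat) (f p : {mpoly R[n]}) : Prop :=
  exists c : 'X_{1..n < k.+1} -> R,
    p = \sum_(a : 'X_{1..n < k.+1} | (mdeg a == k)%N) c a *: f^`M[a].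

Definition lin_indep (R : realType) (n r : nat) (v : 'I_r -> {mpoly R[n]}) : Prop :=
  forall c : 'I_r -> R, \sum_(i < r) c i *: v i = 0 -> forall i, c i = 0.

Definition has_dim (R : realType) (n : nat) (W : {mpoly R[n]} -> Prop) (u : nat) : Prop :=
  (exists v : 'I_u -> {mpoly R[n]}, (forall i, W (v i)) /\ lin_indep v) /\
  (forall r (v : 'I_r -> {mpoly R[n]}), (forall i, W (v i)) -> lin_indep v -> (r <= u)%N).

Notation kset n k := {I : {set 'I_n} | (#|I| == k)%N}.

Definition Mmat (R : realType) (n k d : nat) : 'M[R]_(#|{: kset n k}|, #|{: kset n (d - k)}|) :=
  \matrix_(i, j) (if [disjoint val (enum_val (i : 'I_#|{: kset n k}|)) & val (enum_val (j : 'I_#|{: kset n (d - k)}|))] then 1 else 0).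

Definition Bmat (R : realType) (n k d : nat) := (Mmat R n k d)^T *m Mmat R n k d.

From HB Require Import structures.
From mathcomp Require Import all_boot all_order all_algebra.
From mathcomp Require Import reals.
From mathcomp Require Import mpoly.
From mathcomp Require Import ring zify.
Import Order.TTheory GRing.Theory Num.Theory.
Set Implicit Arguments. Unset Strict Implicit. Unset Printing Implicit Defensive.

(** Fix a [d]-set [X].  The coefficient of [x^(X :\: A')] in the derivative
    [d^A Sym_{d,n}] is [A == A'] for [k]-subsets [A, A'] of [X], so these
    [C(d, k)] derivatives are independent and [u >= C(d, d - k)].  On the other
    side [B = M^T M] where every row of the 0/1 matrix [M] has [C(n - k, d - k)]
    ones, so [Tr B] and the sum of all entries of [B] are explicit, and
    Cauchy-Schwarz over the [C(n, d - k)^2] entries of [B] gives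
    [v <= (C(n, d - k) / C(n - k, d - k))^2].  An elementary estimate on falling
    factorials bounds this by [4 C(d, d - k) / (k + 2)] when [n >= 2 d], hence
    [v / u <= 4 / (k' m + 2)]. *)

Lemma leq_sqr_shift1 k N : 2 * (k + 1) <= N ->
  N ^ 2 * (k + 2) <= 4 * (k + 1) * (N - k) ^ 2.
Proof.
move=> hN; have [t ->] : exists t, N = 2 * (k + 1) + t by exists (N - 2 * (k + 1)); lia.
rewrite (_ : _ - k = k + 2 + t); last by lia.
rewrite !expnS expn0; nia.
Qed.

Lemma leq_sqr_shift k y N : 2 * (k + y) <= N ->
  N ^ 2 * y <= (k + y) * (N - k) ^ 2.
Proof.
move=> hN; have [t ->] : exists t, N = 2 * (k + y) + t by exists (N - 2 * (k + y)); lia.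
rewrite (_ : _ - k = k + 2 * y + t); last by lia.
rewrite !expnS expn0; nia.
Qed.

Lemma ffact_sqr_le k a N : 2 * (k + a.+1) <= N ->
  (N ^_ a.+1) ^ 2 * a.+1`! * (k + 2) <= 4 * (k + a.+1) ^_ a.+1 * ((N - k) ^_ a.+1) ^ 2.
Proof.
elim: a N => [|a IH] N hN.
  by rewrite !ffactn1 -[1`!]/1 muln1; apply: leq_sqr_shift1.
rewrite (ffactnS N) (ffactnS (N - k)) (ffactnS (k + a.+2)) factS.
rewrite (_ : (N - k).-1 = N.-1 - k); last by lia.
rewrite (_ : (k + a.+2).-1 = k + a.+1); last by lia.
have := leq_mul (leq_sqr_shift hN) (IH N.-1 ltac:(lia)).
rewrite (_ : k + a.+2 = (k + a.+1).+1); last by lia.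
move=> step; apply: leq_trans (leq_trans step _); apply: eq_leq; ring.
Qed.

Lemma bin_sqr_le k a n : 0 < a -> 2 * (k + a) <= n ->
  'C(n, a) ^ 2 * (k + 2) <= 4 * 'C(k + a, a) * 'C(n - k, a) ^ 2.
Proof.
case: a => // a _ hn; have fact3_gt0 : 0 < a.+1`! ^ 3 by rewrite expn_gt0 fact_gt0.
rewrite -(leq_pmul2r fact3_gt0).
have := ffact_sqr_le hn; rewrite -!bin_ffact.
by move=> le_ffact; apply: leq_trans (leq_trans le_ffact _); apply: eq_leq; ring.
Qed.

Local Open Scope ring_scope.

Lemma sqr_sum_le (R : realDomainType) (I : finType) (x : I -> R) :
  (\sum_i x i) ^+ 2 <= #|I|%:R * \sum_i x i ^+ 2.
Proof.
set S := \sum_i x i; set S2 := \sum_i x i ^+ 2.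
have row i : \sum_j (x i - x j) ^+ 2 = #|I|%:R * x i ^+ 2 + S2 - (x i * S) *+ 2.
  under eq_bigr do rewrite sqrrB.
  by rewrite big_split sumrB /= sumr_const sumrMnl -mulr_sumr mulr_natl addrAC.
have : 0 <= \sum_i \sum_j (x i - x j) ^+ 2.
  by do 2![apply: sumr_ge0 => ? _]; apply: sqr_ge0.
under eq_bigr do rewrite row.
rewrite sumrB big_split /= -mulr_sumr sumr_const sumrMnl -mulr_suml -/S -/S2.
rewrite -[S2 *+ _]mulr_natl -[#|xpredT|]/#|I| -mulr2n -expr2 -mulrnBl.
by rewrite pmulrn_lge0 // subr_ge0.
Qed.

Definition trace_ratio (R : fieldType) n (A : 'M[R]_n) : R := \tr A ^+ 2 / \tr (A *m A).

Lemma mxtrace_trmx_mul (R : comPzRingType) m n (A : 'M[R]_(m, n)) :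
  \tr (A^T *m A) = \sum_i \sum_j A i j ^+ 2.
Proof.
rewrite exchange_big; apply: eq_bigr => j _; rewrite mxE.
by apply: eq_bigr => i _; rewrite mxE expr2.
Qed.

Section GramOfZeroOneMatrix.
Variables (R : realFieldType) (p q : nat) (M : 'M[R]_(p, q)) (r : R).
Hypothesis M_idem : forall i j, M i j ^+ 2 = M i j.
Hypothesis M_rowsum : forall i, \sum_j M i j = r.
Let B := M^T *m M.

Lemma mxtrace_gram : \tr B = p%:R * r.
Proof.
rewrite mxtrace_trmx_mul; under eq_bigr do under eq_bigr do rewrite M_idem.
by under eq_bigr do rewrite M_rowsum; rewrite sumr_const card_ord mulr_natl.
Qed.

Lemma gram_entry j j' : B j j' = \sum_i M i j * M i j'.
Proof. by rewrite mxE; apply: eq_bigr => i _; rewrite mxE. Qed.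

Lemma sum_gram : \sum_j \sum_j' B j j' = p%:R * r ^+ 2.
Proof.
under eq_bigr do under eq_bigr do rewrite gram_entry.
under eq_bigr do rewrite exchange_big; rewrite exchange_big /=.
under eq_bigr do under eq_bigr do rewrite -mulr_sumr.
under eq_bigr do rewrite -mulr_suml M_rowsum.
by rewrite sumr_const card_ord mulr_natl.
Qed.

Lemma mxtrace_gram_sqr : \tr (B *m B) = \sum_j \sum_j' B j j' ^+ 2.
Proof. by rewrite -mxtrace_trmx_mul trmx_mul trmxK. Qed.

Lemma mxtrace_gram_sqr_ge0 : 0 <= \tr (B *m B).
Proof. by rewrite mxtrace_gram_sqr; do 2![apply: sumr_ge0 => ? _]; apply: sqr_ge0. Qed.

Lemma trace_ratio_gram_ge0 : 0 <= trace_ratio B.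
Proof. by rewrite /trace_ratio divr_ge0 ?sqr_ge0 ?mxtrace_gram_sqr_ge0. Qed.

Lemma trace_ratio_gram_le : trace_ratio B <= (q%:R / r) ^+ 2.
Proof.
rewrite /trace_ratio.
have cs := sqr_sum_le (fun jj : 'I_q * 'I_q => B jj.1 jj.2).
rewrite card_prod card_ord natrM -(pair_big xpredT xpredT (fun j j' => B j j')) in cs.
rewrite -(pair_big xpredT xpredT (fun j j' => B j j' ^+ 2)) in cs.
rewrite sum_gram -mxtrace_gram_sqr in cs.
rewrite mxtrace_gram; set T := \tr (B *m B) in cs *.
have [->|r0] := eqVneq r 0; first by rewrite mulr0 expr0n mul0r sqr_ge0.
have := mxtrace_gram_sqr_ge0; rewrite -/T.
rewrite le_eqVlt => /predU1P[<-|T0]; first by rewrite invr0 mulr0 sqr_ge0.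
rewrite ler_pdivrMr // expr_div_n mulrAC ler_pdivlMr ?exprn_even_gt0 ?r0 //.
by rewrite -exprMn -mulrA -expr2 [q%:R ^+ 2]expr2.
Qed.
End GramOfZeroOneMatrix.

Lemma setD_eq_setU (T : finType) (A I M : {set T}) :
  (A \subset I) && (I :\: A == M) = (I == A :|: M) && [disjoint A & M].
Proof.
apply/andP/andP => [[sAI /eqP<-] | [/eqP-> dAM]].
  rewrite -{1}(setID I A) (setIidPr sAI) eqxx.
  by rewrite -setI_eq0 setIDA setDE setIAC setICr set0I.
rewrite subsetUl setDUl setDv set0U.
by have /setDidPl-> : [disjoint M & A] by rewrite disjoint_sym.
Qed.

Lemma disjoint_setD (T : finType) (A B X : {set T}) :
  A \subset X -> [disjoint A & X :\: B] = (A \subset B).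
Proof.
move=> sAX; rewrite disjoints_subset; apply/subsetP/subsetP => sub x Ax.
all: by have := sub x Ax; rewrite !inE (subsetP sAX x Ax) andbT negbK.
Qed.

Lemma disjoint_setD_card_eq (T : finType) (A B X : {set T}) :
    A \subset X -> B \subset X -> #|A| = #|B| ->
  [disjoint B & X :\: A] && (#|B :|: (X :\: A)| == #|X|) = (A == B).
Proof.
move=> sAX sBX cardAB; rewrite disjoint_setD //; case: (eqVneq A B) => [<- | AB].
  by rewrite subxx -{2}(setID X A) (setIidPr sAX) eqxx.
suff -> : (B \subset A) = false by [].
by apply: contraNF AB => sBA; rewrite eq_sym eqEcard sBA cardAB leqnn.
Qed.

Section SetMonomials.
Variable n : nat.

Definition mnm_of_set (S : {set 'I_n}) : 'X_{1..n} := [multinom (i \in S : nat) | i < n].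

Lemma mnm_of_setE S i : mnm_of_set S i = (i \in S).
Proof. exact: mnmE. Qed.

Lemma mnm_of_set_inj : injective mnm_of_set.
Proof.
move=> S T /mnmP eST; apply/setP => i.
by have := eST i; rewrite !mnm_of_setE; do 2!case: (_ \in _).
Qed.

Lemma mdeg_mnm_of_set S : mdeg (mnm_of_set S) = #|S|.
Proof.
rewrite mdegE -sum1_card [RHS]big_mkcond /=.
by apply: eq_bigr => i _; rewrite mnm_of_setE; case: (i \in S).
Qed.

Variable R : realType.

Lemma xIE S : xI R S = 'X_[mnm_of_set S].
Proof.
rewrite mpolyXE_id /xI big_mkcond /=.
by apply: eq_bigr => i _; rewrite mnm_of_setE; case: (i \in S); rewrite ?expr1 ?expr0.
Qed.

Lemma mderiv_xI I A :
  (xI R I)^`M[mnm_of_set A] = (A \subset I)%:R *: xI R (I :\: A).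
Proof.
have -> : (A \subset I) = (\prod_(i < n) (mnm_of_set I i) ^_ (mnm_of_set A i))%N :> nat.
  case: (boolP (A \subset I)) => [sAI | /subsetPn[i Ai I'i]].
    rewrite big1 // => i _; rewrite !mnm_of_setE.
    by case: (boolP (i \in A)) => [/(subsetP sAI)->|].
  by rewrite (bigD1 i) //= !mnm_of_setE Ai (negbTE I'i) ffact0n.
rewrite !xIE mderivmX; congr (_ *: 'X_[_]); apply/mnmP => i.
by rewrite mnmBE !mnm_of_setE inE; case: (i \in A); case: (i \in I).
Qed.

Lemma mcoeff_mderiv_Sym d A M :
  ((Sym R n d)^`M[mnm_of_set A])@_(mnm_of_set M) =
    ([disjoint A & M] && (#|A :|: M| == d))%:R.
Proof.
rewrite /Sym !raddf_sum /=.
under eq_bigr => I _.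
  rewrite mderiv_xI mcoeffZ xIE mcoeffX (inj_eq mnm_of_set_inj) -natrM mulnb setD_eq_setU.
  over.
case: (boolP [disjoint A & M]) => dAM /=; last by rewrite big1 // => I _; rewrite andbF.
rewrite big_mkcond (bigD1 (A :|: M)) //= eqxx big1 ?addr0 => [|I /negbTE->].
  by case: ifP.
by rewrite if_same.
Qed.
End SetMonomials.

Lemma lin_indep_biorthogonal (R : realType) n r (v : 'I_r -> {mpoly R[n]})
    (m : 'I_r -> 'X_{1..n}) :
  (forall i j, (v j)@_(m i) = (i == j)%:R) -> lin_indep v.
Proof.
move=> vm c sum0 i; have := congr1 (mcoeff (m i)) sum0.
rewrite mcoeff0 raddf_sum (bigD1 i) //= big1 => [|j ji].
  by rewrite mcoeffZ vm eqxx mulr1 addr0.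
by rewrite mcoeffZ vm eq_sym (negbTE ji) mulr0.
Qed.

Lemma mderiv_in_partial_span (R : realType) n k (f : {mpoly R[n]}) (a : 'X_{1..n}) :
  mdeg a = k -> in_partial_span k f f^`M[a].
Proof.
move=> dega; have ltak : (mdeg a < k.+1)%N by rewrite dega.
exists (fun b : 'X_{1..n < k.+1} => (val b == a)%:R).
rewrite (bigD1 (BMultinom ltak)) /= ?dega // eqxx scale1r big1 ?addr0 // => b /andP[_ ba].
rewrite (_ : val b == a = false) ?scale0r //.
by apply: contraNF ba => /eqP ba; apply/eqP/val_inj.
Qed.

Lemma dim_partial_Sym_ge (R : realType) n k d u : (d <= n)%N ->
  has_dim (in_partial_span k (Sym R n d)) u -> ('C(d, k) <= u)%N.
Proof.
move=> dn [_ maxu].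
have [X] : exists X, X \in [set X : {set 'I_n} | #|X| == d].
  by apply/card_gt0P; rewrite card_draws card_ord bin_gt0.
rewrite inE => /eqP cardX.
pose P := [set A : {set 'I_n} | A \subset X & #|A| == k].
have PA (i : 'I_#|P|) : enum_val i \subset X /\ #|enum_val i| = k.
  by have := enum_valP i; rewrite inE => /andP[? /eqP].
rewrite -cardX -cards_draws.
apply: (maxu _ (fun i => (Sym R n d)^`M[mnm_of_set (enum_val i)])).
  by move=> i; apply: mderiv_in_partial_span; rewrite mdeg_mnm_of_set (PA i).2.
apply: (lin_indep_biorthogonal (m := fun i => mnm_of_set (X :\: enum_val i))) => i j.
have [[sAiX cardAi] [sAjX cardAj]] := (PA i, PA j).
rewrite mcoeff_mderiv_Sym -cardX disjoint_setD_card_eq ?cardAi ?cardAj //.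
by rewrite (inj_eq enum_val_inj).
Qed.

Lemma card_kset n k : #|{: kset n k}| = 'C(n, k).
Proof.
rewrite card_sig; have := card_draws 'I_n k; rewrite card_ord => <-.
by apply: eq_card => A; rewrite !inE.
Qed.

Section IncidenceMatrix.
Variables (R : realType) (n k d : nat).

Lemma Mmat_idem i j : Mmat R n k d i j ^+ 2 = Mmat R n k d i j.
Proof. by rewrite mxE; case: ifP; rewrite ?expr1n ?expr0n. Qed.

Lemma Mmat_rowsum i : \sum_j Mmat R n k d i j = 'C(n - k, d - k)%:R.
Proof.
set A := val (enum_val i); have /eqP cardA : #|A| == k := valP (enum_val i).
under eq_bigr do rewrite mxE.
rewrite -(big_enum_val (fun J : kset n (d - k) => if [disjoint A & val J] then 1 else 0)).
rewrite -(big_sub [pred J : {set 'I_n} | #|J| == (d - k)%N]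
                  (fun J => if [disjoint A & J] then 1 else 0)).
rewrite -big_mkcondr sumr_const -mulr_natl mulr1; congr _%:R.
have cardCA : #|~: A| = (n - k)%N.
  by rewrite -cardA -[n in (n - _)%N](card_ord n) -(cardsC A) addKn.
rewrite -cardCA -cards_draws; apply: eq_card => J.
by rewrite unfold_in /= !inE disjoint_sym disjoints_subset andbC.
Qed.

Lemma trace_ratio_Bmat_le :
  trace_ratio (Bmat R n k d) <= ('C(n, d - k)%:R / 'C(n - k, d - k)%:R) ^+ 2.
Proof.
by rewrite -card_kset; apply: trace_ratio_gram_le; [apply: Mmat_idem | apply: Mmat_rowsum].
Qed.
End IncidenceMatrix.

Lemma trace_ratio_Bmat_div_dim_le (R : realType) n k d u :
    (k < d)%N -> (2 * d <= n)%N -> has_dim (in_partial_span k (Sym R n d)) u ->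
  trace_ratio (Bmat R n k d) / u%:R <= 4 / (k + 2)%:R.
Proof.
move=> kd dn dimu; set a := (d - k)%N.
have a0 : (0 < a)%N by rewrite subn_gt0.
have ka : (k + a)%N = d by rewrite subnKC // ltnW.
have Cd_le_u : ('C(d, a) <= u)%N.
  rewrite /a bin_sub; last exact: ltnW.
  by apply: dim_partial_Sym_ge dimu; lia.
have binC := @bin_sqr_le k a n a0 ltac:(lia); rewrite ka addn2 in binC.
have := trace_ratio_Bmat_le R n k d; rewrite -/a => v_le.
have Cd0 : (0 < 'C(d, a))%N by rewrite bin_gt0 leq_subr.
have Cnk0 : (0 < 'C(n - k, a))%N by rewrite bin_gt0; lia.
set x := trace_ratio _ in v_le *.
have x0 : 0 <= x := trace_ratio_gram_ge0 (Mmat R n k d).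
apply: (@le_trans _ _ (x / 'C(d, a)%:R)).
  apply: (ler_wpM2l x0).
  by rewrite lef_pV2 ?posrE ?ltr0n ?ler_nat // (leq_trans Cd0).
apply: (@le_trans _ _ (('C(n, a)%:R / 'C(n - k, a)%:R) ^+ 2 / 'C(d, a)%:R)).
  by rewrite ler_pM2r ?invr_gt0 ?ltr0n.
rewrite expr_div_n -mulrA -invfM ler_pdivrMr ?mulr_gt0 ?ltr0n ?expn_gt0 ?Cnk0 //.
rewrite mulrAC ler_pdivlMr ?ltr0n ?addn2 //.
by rewrite -!natrX -!natrM ler_nat [(_ * 'C(d, a))%N]mulnC mulnA.
Qed.

Theorem proposition2 (R : realType) (k' d' n' : nat) :
  (0 < k')%N -> (0 < d')%N -> (0 < n')%N -> (k' < d')%N -> (2 * d' < n')%N ->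
  forall u : nat -> nat,
    (forall m, (0 < m)%N ->
       has_dim (in_partial_span (k' * m) (Sym R (n' * m) (d' * m))) (u m)) ->
  let v := fun m : nat =>
    (\tr (Bmat R (n' * m) (k' * m) (d' * m))) ^+ 2 /
    \tr (Bmat R (n' * m) (k' * m) (d' * m) *m Bmat R (n' * m) (k' * m) (d' * m)) in
  forall eps : R, 0 < eps ->
    exists N : nat, forall m, (N <= m)%N -> `| v m / (u m)%:R | < eps.
Proof.
move=> k'0 _ _ k'd' d'n' u dimu v eps eps0.
have N_gt := archi_boundP (divr_ge0 (ler0n R 4) (ltW eps0)).
exists (Num.Def.archi_bound (4 / eps)).+1 => m Nm.
have m0 : (0 < m)%N by apply: leq_trans Nm.
have km_dm : (k' * m < d' * m)%N by rewrite ltn_pmul2r.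
have dm_nm : (2 * (d' * m) <= n' * m)%N by rewrite mulnA leq_pmul2r // ltnW.
rewrite ger0_norm; last by apply: divr_ge0 => //; apply: trace_ratio_gram_ge0.
apply: le_lt_trans (trace_ratio_Bmat_div_dim_le km_dm dm_nm (dimu m m0)) _.
rewrite ltr_pdivrMr ?ltr0n ?addn2 // mulrC -ltr_pdivrMr //.
apply: lt_le_trans N_gt _; rewrite ler_nat.
set N := Num.Def.archi_bound _ in Nm *; nia.
Qed.
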